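(* Let $(\mathcal{M},\varphi,\psi)$ be a two-state noncommutative probability space, $n\in\mathbb{N}$ and $\pi\in\mathrm{NC}(n)$. Then for all $a_1,\dots,a_n\in\mathcal{M}$, $$\beta^{\varphi,\psi}_\pi(a_1,\dots,a_n)=\sum_{\rho\in\mathrm{NC}(n),\ \rho\ll\pi}\ \prod_{V\in\mathrm{OB}(\rho)}r_V^{\varphi,\psi}(a_1,\dots,a_n)\prod_{W\in\mathrm{IB}(\rho)}r_W^{\psi}(a_1,\dots,a_n).$$
   Context: A two-state noncommutative probability space is a unital $*$-algebra $\mathcal{M}$ with two states $\varphi,\psi$, $\psi$ tracial. $\mathrm{NC}(n)$: noncrossing partitions of $[n]$; $\mathrm{Int}(n)$: interval partitions. A block $W$ of $\pi$ is nested in a block $V\ne W$ if $\min V\le w\le\max V$ for all $w\in W$; outer blocks are those not nested in any other block, inner blocks are the others; $\mathrm{OB}(\pi)$, $\mathrm{IB}(\pi)$ denote them. For multilinear functionals $(L_n)$ and $V=\{i_1<\dots<i_s\}$, $L_V(a_1,\dots,a_n)=L_s(a_{i_1},\dots,a_{i_s})$. Boolean cumulants $\beta^\theta_n$ of a state $\theta$: $\theta(a_1\cdots a_n)=\sum_{\sigma\in\mathrm{Int}(n)}\prod_{V\in\sigma}\beta^\theta_V(a_1,\dots,a_n)$. Free cumulants $r^\psi$: $\psi(a_1\cdots a_n)=\sum_{\sigma\in\mathrm{NC}(n)}\prod_{V\in\sigma}r^\psi_V$. $c$-free cumulants $r^{\varphi,\psi}$: $\varphi(a_1\cdots a_n)=\sum_{\sigma\in\mathrm{NC}(n)}\prod_{V\in\mathrm{OB}(\sigma)}r^{\varphi,\psi}_V\prod_{W\in\mathrm{IB}(\sigma)}r^\psi_W$.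 The nested two-state Boolean cumulant functional is $\beta^{\varphi,\psi}_\pi(a_1,\dots,a_n):=\prod_{V\in\mathrm{OB}(\pi)}\beta^\varphi_V(a_1,\dots,a_n)\prod_{W\in\mathrm{IB}(\pi)}\beta^\psi_W(a_1,\dots,a_n)$. The irreducible refinement order: for $\rho,\pi\in\mathrm{NC}(n)$, $\rho\ll\pi$ if $\rho\le\pi$ in refinement order (every block of $\rho$ is contained in a block of $\pi$) and for every block $W\in\pi$, $\min W$ and $\max W$ lie in the same block of $\rho$. *)

From HB Require Import structures.
From mathcomp Require Import all_boot all_order all_algebra.
Set Implicit Arguments. Unset Strict Implicit. Unset Printing Implicit Defensive.
Import Order.TTheory GRing.Theory Num.Theory.
Local Open Scope ring_scope.

(* Scalars: a numeric closed field C (e.g. the complex numbers), with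
   conjugation x^* and the partial order 0 <= x meaning "x is real >= 0".
   M : a unital C-algebra with an involution star. *)

Definition is_star_involution (C : numClosedFieldType) (M : algType C)
    (star : M -> M) : Prop :=
  [/\ forall x y : M, star (x + y) = star x + star y,
      forall (c : C) (x : M), star (c *: x) = Num.conj c *: star x,
      forall x y : M, star (x * y) = star y * star x
    & forall x : M, star (star x) = x].

Definition is_state (C : numClosedFieldType) (M : algType C)
    (star : M -> M) (f : M -> C) : Prop :=
  [/\ forall (c : C) (x y : M), f (c *: x + y) = c * f x + f y,
      f 1 = 1
    & forall x : M, 0 <= f (star x * x)].

Definition is_tracial (C : numClosedFieldType) (M : algType C) (f : M -> C) :=
  forall x y : M, f (x * y) = f (y * x).

Section Partitions.
Variable n : nat.

Definition is_part (P : {set {set 'I_n}}) : bool := partition P [set: 'I_n].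

Definition noncrossing (P : {set {set 'I_n}}) : bool :=
  [forall V in P, forall W in P, (V != W) ==>
     ~~ [exists a : 'I_n, exists b : 'I_n, exists c : 'I_n, exists d : 'I_n,
           [&& (a < b)%N, (b < c)%N, (c < d)%N, a \in V, c \in V, b \in W & d \in W]]].

Definition is_NC (P : {set {set 'I_n}}) : bool := is_part P && noncrossing P.

Definition is_interval_part (P : {set {set 'I_n}}) : bool :=
  is_part P &&
  [forall V in P, forall i : 'I_n, forall j : 'I_n, forall k : 'I_n,
     [&& (i < j)%N, (j < k)%N, i \in V & k \in V] ==> (j \in V)].

Definition bmin (V : {set 'I_n}) : nat := \big[minn/n]_(i in V) (val i).
Definition bmax (V : {set 'I_n}) : nat := \max_(i in V) (val i).

Definition nested (W V : {set 'I_n}) : bool :=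
  (V != W) && [forall w in W, (bmin V <= val w <= bmax V)%N].

Definition outer_blocks (P : {set {set 'I_n}}) : {set {set 'I_n}} :=
  [set V in P | [forall W in P, ~~ nested V W]].

Definition inner_blocks (P : {set {set 'I_n}}) : {set {set 'I_n}} :=
  [set V in P | [exists W in P, nested V W]].

Definition refines (rho pi : {set {set 'I_n}}) : bool :=
  [forall V in rho, exists W in pi, V \subset W].

Definition irr_refines (rho pi : {set {set 'I_n}}) : bool :=
  refines rho pi &&
  [forall W in pi, exists V in rho, forall i in W,
     ((val i == bmin W) || (val i == bmax W)) ==> (i \in V)].

End Partitions.

(* A family (L_n) of functionals is encoded as L : seq M -> C, L_s applied
   to the list of its s arguments. L_V(a_1..a_n) = L_s(a_{i_1},..,a_{i_s})
   with i_1 < .. < i_s the elements of V (enum V is increasing). *)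
Definition restr (C M : Type) (L : seq M -> C) (n : nat) (a : 'I_n -> M)
    (V : {set 'I_n}) : C := L [seq a i | i <- enum V].

Definition is_boolean_cumulants (C : numClosedFieldType) (M : algType C)
    (theta : M -> C) (beta : seq M -> C) : Prop :=
  forall (n : nat) (a : 'I_n -> M),
    theta (\prod_(i < n) a i) =
    \sum_(s : {set {set 'I_n}} | is_interval_part s) \prod_(V in s) restr beta a V.

Definition is_free_cumulants (C : numClosedFieldType) (M : algType C)
    (psi : M -> C) (r : seq M -> C) : Prop :=
  forall (n : nat) (a : 'I_n -> M),
    psi (\prod_(i < n) a i) =
    \sum_(s : {set {set 'I_n}} | is_NC s) \prod_(V in s) restr r a V.

Definition is_cfree_cumulants (C : numClosedFieldType) (M : algType C)
    (phi : M -> C) (rpsi rc : seq M -> C) : Prop :=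
  forall (n : nat) (a : 'I_n -> M),
    phi (\prod_(i < n) a i) =
    \sum_(s : {set {set 'I_n}} | is_NC s)
      (\prod_(V in outer_blocks s) restr rc a V) *
      (\prod_(W in inner_blocks s) restr rpsi a W).

Definition beta2 (C : numClosedFieldType) (M : algType C)
    (bphi bpsi : seq M -> C) (n : nat) (pi : {set {set 'I_n}}) (a : 'I_n -> M) : C :=
  (\prod_(V in outer_blocks pi) restr bphi a V) *
  (\prod_(W in inner_blocks pi) restr bpsi a W).

(* Every noncrossing partition rho has exactly one interval partition I with
   rho << I, namely the hulls of its outer blocks.  Grouping the c-free
   moment-cumulant formula according to this I turns it into the Boolean
   moment-cumulant formula in which the cumulant of an interval is the sum,
   over the irreducible noncrossing partitions of that interval, of r^{phi,psi}
   on the outer block times r^psi on the inner blocks; by induction on the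
   length, beta^phi is therefore given by that sum, and beta^psi by the same sum
   with r^psi throughout.  Finally the partitions rho << pi are exactly the
   unions of irreducible noncrossing partitions of the blocks of pi, the outer
   blocks of rho being the outer blocks of the pieces of the outer blocks of pi,
   so the sum over rho << pi factorizes over the blocks of pi. *)

From HB Require Import structures.
From mathcomp Require Import all_boot all_order all_algebra.
From mathcomp Require Import zify.
Set Implicit Arguments. Unset Strict Implicit. Unset Printing Implicit Defensive.
Import Order.TTheory GRing.Theory Num.Theory.

Section Blocks.
Variable n : nat.
Implicit Types (U V W B X : {set 'I_n}) (P Q I : {set {set 'I_n}}).

Lemma bmin_le V (i : 'I_n) : i \in V -> bmin V <= i.
Proof.
move=> iV; rewrite /bmin; have := mem_index_enum i; rewrite unlock.
elim: (index_enum _) => //= j r IH; rewrite inE => /orP[/eqP<-|/IH le_i].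
  by rewrite iV geq_minl.
by case: (j \in V) => //; exact: leq_trans (geq_minr _ _) le_i.
Qed.

Lemma le_bmax V (i : 'I_n) : i \in V -> i <= bmax V.
Proof. by move=> iV; rewrite /bmax (bigD1 i) //= leq_maxl. Qed.

Lemma bmin_attained V : V != set0 -> exists2 y : 'I_n, y \in V & bmin V = y.
Proof.
case/set0Pn => x xV.
have: (bmin V == n) || [exists y in V, bmin V == val y].
  apply: (big_ind (fun m => (m == n) || [exists y in V, m == val y])) => [|m1 m2 h1 h2|y yV].
  - by rewrite eqxx.
  - by rewrite /minn; case: ifP.
  - by apply/orP; right; apply/existsP; exists y; rewrite yV eqxx.
case/orP => [/eqP e|/existsP[y /andP[yV /eqP e]]]; last by exists y.
by have := bmin_le xV; rewrite e leqNgt ltn_ord.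
Qed.

Lemma bmax_attained V : V != set0 -> exists2 y : 'I_n, y \in V & bmax V = y.
Proof.
move=> V0; rewrite /bmax; have [|y yV ->] := eq_bigmax_cond val (A := mem V).
  by rewrite card_gt0.
by exists y.
Qed.

Lemma bmin_least V (y : 'I_n) :
  y \in V -> (forall i, i \in V -> y <= i) -> bmin V = y.
Proof.
move=> yV le_y; have [|z zV ez] := bmin_attained (V := V); first by apply/set0Pn; exists y.
by apply/eqP; rewrite eqn_leq bmin_le // ez le_y.
Qed.

Lemma bmax_greatest V (y : 'I_n) :
  y \in V -> (forall i, i \in V -> i <= y) -> bmax V = y.
Proof.
move=> yV ge_y; have [|z zV ez] := bmax_attained (V := V); first by apply/set0Pn; exists y.
by apply/eqP; rewrite eqn_leq le_bmax // ez ge_y.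
Qed.

Lemma bmin_le_bmax V : V != set0 -> bmin V <= bmax V.
Proof. by case/set0Pn => x xV; rewrite (leq_trans (bmin_le xV)) // le_bmax. Qed.

Lemma subset_bmin_bmax B W : B != set0 -> B \subset W ->
  bmin W <= bmin B /\ bmax B <= bmax W.
Proof.
move=> B0 /subsetP BW; have [b bB ->] := bmin_attained B0.
by have [c cB ->] := bmax_attained B0; rewrite bmin_le ?le_bmax ?BW.
Qed.

Lemma nestedE W V : W != set0 ->
  nested W V = [&& V != W, bmin V <= bmin W & bmax W <= bmax V].
Proof.
move=> W0; rewrite /nested; congr (_ && _).
have [x xW ex] := bmin_attained W0; have [y yW ey] := bmax_attained W0.
apply/forallP/andP => [inVW|[le_min le_max] w].
  by rewrite ex ey; have /implyP/(_ xW)/andP[-> _] := inVW x;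
     have /implyP/(_ yW)/andP[_ ->] := inVW y.
apply/implyP => wW; rewrite (leq_trans le_min (bmin_le wW)) /=.
exact: leq_trans (le_bmax wW) le_max.
Qed.

Definition hull V := [set i : 'I_n | bmin V <= i <= bmax V].

Lemma in_hull V (i : 'I_n) : (i \in hull V) = (bmin V <= i <= bmax V).
Proof. by rewrite inE. Qed.

Lemma sub_hull V : V \subset hull V.
Proof. by apply/subsetP => i iV; rewrite in_hull bmin_le ?le_bmax. Qed.

Lemma hull_eq0 V : (hull V == set0) = (V == set0).
Proof.
apply/idP/idP => [|/eqP->]; last first.
  by apply/eqP/setP => i; rewrite /hull !inE /bmin big_set0 leqNgt ltn_ord.
by apply: contraTT => /set0Pn[x xV]; apply/set0Pn; exists x; rewrite (subsetP (sub_hull V)).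
Qed.

Lemma bmin_hull V : V != set0 -> bmin (hull V) = bmin V.
Proof.
move=> V0; have [x xV ex] := bmin_attained V0; rewrite ex.
apply: bmin_least => [|i]; first exact: subsetP (sub_hull V) _ xV.
by rewrite in_hull -ex => /andP[].
Qed.

Lemma bmax_hull V : V != set0 -> bmax (hull V) = bmax V.
Proof.
move=> V0; have [x xV ex] := bmax_attained V0; rewrite ex.
apply: bmax_greatest => [|i]; first exact: subsetP (sub_hull V) _ xV.
by rewrite in_hull -ex => /andP[].
Qed.

Lemma nested_sub_hull W V : nested W V -> W \subset hull V.
Proof.
by case/andP => _ /forallP inV; apply/subsetP => i iW; have := inV i; rewrite iW in_hull.
Qed.

Lemma sub_hull_nested W V : W \subset hull V -> V != W -> nested W V.
Proof.
move=> WV VW; apply/andP; split => //; apply/forallP => w; apply/implyP => wW.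
by rewrite -in_hull (subsetP WV).
Qed.

Lemma outer_blocksP P V :
  reflect (V \in P /\ forall W, W \in P -> ~~ nested V W) (V \in outer_blocks P).
Proof.
rewrite inE; apply: (iffP andP) => [[VP /forallP notV]|[VP notV]]; split => //.
  by move=> W WP; have := notV W; rewrite WP.
by apply/forallP => W; apply/implyP; apply: notV.
Qed.

Lemma inner_blocksE P : inner_blocks P = P :\: outer_blocks P.
Proof.
apply/setP => V; rewrite !inE; case: (V \in P) => //=; rewrite andbT.
by rewrite negb_forall; apply: eq_existsb => W; rewrite negb_imply negbK.
Qed.

Lemma noncrossingP P :
  reflect (forall U V (a b c d : 'I_n), U \in P -> V \in P -> U != V ->
             a < b -> b < c -> c < d -> a \in U -> c \in U -> b \in V -> d \in V -> False)
          (noncrossing P).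
Proof.
apply: (iffP forallP) => [ncP U V a b c d UP VP UV ab bc cd aU cU bV dV|ncP U].
  have /implyP/(_ UP)/forallP/(_ V)/implyP/(_ VP)/implyP/(_ UV)/negP := ncP U; apply.
  by apply/existsP; exists a; apply/existsP; exists b; apply/existsP; exists c;
     apply/existsP; exists d; rewrite ab bc cd aU cU bV dV.
apply/implyP => UP; apply/forallP => V; apply/implyP => VP; apply/implyP => UV.
apply/negP => /existsP[a /existsP[b /existsP[c /existsP[d]]]].
by case/and5P => ab bc cd aU /and3P[cU bV dV]; apply: (ncP U V a b c d).
Qed.

Lemma noncrossingS P Q : Q \subset P -> noncrossing P -> noncrossing Q.
Proof.
move=> /subsetP QP /noncrossingP ncP; apply/noncrossingP => U V a b c d UQ VQ.
exact: ncP (QP _ UQ) (QP _ VQ).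
Qed.

Lemma is_part_blocks P : is_part P ->
  [/\ trivIset P, forall V, V \in P -> V != set0 &
      forall x : 'I_n, pblock P x \in P /\ x \in pblock P x].
Proof.
case/and3P => /eqP coverP tP P0; split => // [V VP|x].
  by apply: contraNneq P0 => <-.
by rewrite pblock_mem ?mem_pblock coverP ?inE.
Qed.

Lemma block_eq P U V (x : 'I_n) :
  trivIset P -> U \in P -> V \in P -> x \in U -> x \in V -> U = V.
Proof.
by move=> tP UP VP xU xV; rewrite -(def_pblock tP UP xU) (def_pblock tP VP xV).
Qed.

Lemma block_val_neq P U V (x y : 'I_n) : trivIset P -> U \in P -> V \in P ->
  U != V -> x \in U -> y \in V -> (x : nat) != y.
Proof.
move=> tP UP VP UV xU yV; apply: contraNneq UV => /val_inj exy.
by rewrite exy in xU; apply/eqP; apply: block_eq tP UP VP xU yV.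
Qed.

Lemma noncrossing_laminar P U V :
  noncrossing P -> trivIset P -> U \in P -> V \in P -> U != V ->
  U != set0 -> V != set0 ->
  [|| bmax U < bmin V, bmax V < bmin U, nested U V | nested V U].
Proof.
move=> ncP tP; wlog lt_min : U V / bmin U < bmin V.
  move=> sym UP VP UV U0 V0.
  have [x xU ex] := bmin_attained U0; have [y yV ey] := bmin_attained V0.
  have := block_val_neq tP UP VP UV xU yV; rewrite -ex -ey.
  case: (ltngtP (bmin U) (bmin V)) => // lt_min _; first exact: sym.
  rewrite eq_sym in UV.
  by case/or4P: (sym V U lt_min VP UP UV V0 U0) => ->; rewrite ?orbT.
move=> UP VP UV U0 V0.
have [xu xuU exu] := bmin_attained U0; have [yu yuU eyu] := bmax_attained U0.
have [xv xvV exv] := bmin_attained V0; have [yv yvV eyv] := bmax_attained V0.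
have [//|le_minV] := ltnP (bmax U) (bmin V).
have lt_minV : bmin V < bmax U.
  rewrite ltn_neqAle le_minV andbT exv eyu.
  by rewrite (block_val_neq tP VP UP _ xvV yuU) // eq_sym.
have [lt_max|le_max] := ltnP (bmax V) (bmax U).
  by rewrite (nestedE _ V0) UV (ltnW lt_min) (ltnW lt_max) !orbT.
have lt_max : bmax U < bmax V.
  by rewrite ltn_neqAle le_max andbT eyv eyu (block_val_neq tP UP VP UV yuU yvV).
move/noncrossingP: ncP => /(_ U V xu xv yu yv UP VP UV) []//;
  by rewrite -?exu -?exv -?eyu -?eyv.
Qed.

Lemma mem_hull_outer P (x : 'I_n) : is_NC P ->
  exists2 V, V \in outer_blocks P & x \in hull V.
Proof.
case/andP => pP ncP; have [tP P0 pblockP] := is_part_blocks pP.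
pose S := [pred B | (B \in P) && (x \in hull B)].
have Sx : S (pblock P x).
  by case: (pblockP x) => xP xB; rewrite /S /= xP (subsetP (sub_hull _)).
(* a block whose hull contains x with least minimum is outer *)
have [B /andP[BP xB] minB] := arg_minnP (@bmin n) Sx.
exists B => //; apply/outer_blocksP; split => // W WP; apply/negP => nBW.
have B0 := P0 _ BP; have W0 := P0 _ WP.
move: (nBW); rewrite (nestedE _ B0) => /and3P[WB le_min le_max].
have SW : S W by rewrite /S /= WP in_hull; move: xB; rewrite in_hull; lia.
have [u uB eu] := bmin_attained B0; have [w wW ew] := bmin_attained W0.
have BW : B != W by rewrite eq_sym.
move/negP: (block_val_neq tP BP WP BW uB wW); apply.
by rewrite -eu -ew eqn_leq le_min minB.
Qed.

Lemma block_sub_hull_outer P B : is_NC P -> B \in P ->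
  exists2 V, V \in outer_blocks P & B \subset hull V.
Proof.
move=> ncP BP; have /andP[pP nP] := ncP; have [tP P0 _] := is_part_blocks pP.
have [x xB] := set0Pn _ (P0 _ BP); have [V VO xV] := mem_hull_outer x ncP.
exists V => //; case/outer_blocksP: VO => VP notV.
have [<-|BV] := eqVneq B V; first exact: sub_hull.
have := bmin_le xB; have := le_bmax xB; move: xV; rewrite in_hull.
case/or4P: (noncrossing_laminar nP tP BP VP BV (P0 _ BP) (P0 _ VP)) => [||/nested_sub_hull//|nVB].
- by lia.
- by lia.
- by have := notV _ BP; rewrite nVB.
Qed.

Definition interval_closure P := [set hull V | V in outer_blocks P].

Lemma interval_closure_interval P : is_NC P -> is_interval_part (interval_closure P).
Proof.
move=> ncP; have /andP[pP nP] := ncP; have [tP P0 _] := is_part_blocks pP.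
have outerP V : V \in outer_blocks P -> V \in P by case/outer_blocksP.
apply/andP; split; last first.
  apply/forallP => X; apply/implyP => /imsetP[V _ ->].
  apply/forallP => i; apply/forallP => j; apply/forallP => k; apply/implyP.
  by rewrite !in_hull; lia.
apply/and3P; split.
- apply/eqP/setP => x; rewrite inE; have [V VO xV] := mem_hull_outer x ncP.
  by apply/bigcupP; exists (hull V) => //; apply: imset_f.
- apply/trivIsetP => X Y /imsetP[V VO ->] /imsetP[W WO ->] hVW.
  have VW : V != W by apply: contraNneq hVW => ->.
  case/outer_blocksP: (VO) => VP notV; case/outer_blocksP: (WO) => WP notW.
  apply/pred0P => i /=; apply/negP => /andP[]; rewrite !in_hull.
  case/or4P: (noncrossing_laminar nP tP VP WP VW (P0 _ VP) (P0 _ WP)) => [||nVW|nWV].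
  + by lia.
  + by lia.
  + by have := notV _ WP; rewrite nVW.
  + by have := notW _ VP; rewrite nWV.
- apply/imsetP => [][V VO /esym/eqP]; apply/negP.
  by rewrite hull_eq0 P0 // outerP.
Qed.

Lemma irr_refines_closure P : is_NC P -> irr_refines P (interval_closure P).
Proof.
move=> ncP; have /andP[pP _] := ncP; have [_ P0 _] := is_part_blocks pP.
apply/andP; split.
  apply/forallP => B; apply/implyP => BP.
  have [V VO BV] := block_sub_hull_outer ncP BP.
  by apply/existsP; exists (hull V); rewrite BV andbT; apply: imset_f.
apply/forallP => X; apply/implyP => /imsetP[V VO ->].
have VP : V \in P by case/outer_blocksP: VO.
have V0 := P0 _ VP; have [u uV eu] := bmin_attained V0; have [w wV ew] := bmax_attained V0.
apply/existsP; exists V; rewrite VP; apply/forallP => i; apply/implyP => _.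
rewrite bmin_hull // bmax_hull // eu ew.
by apply/implyP => /orP[]/eqP/val_inj->.
Qed.

Lemma irr_refines_extremal_block P I X : is_part P -> is_part I ->
  irr_refines P I -> X \in I ->
  exists2 E, E \in P & [/\ E \subset X, bmin E = bmin X & bmax E = bmax X].
Proof.
move=> pP pI /andP[/forallP refPI /forallP extPI] XI.
have [tI I0 _] := is_part_blocks pI.
have /implyP/(_ XI)/existsP[E /andP[EP /forallP extE]] := extPI X.
have [u uX eu] := bmin_attained (I0 _ XI); have [w wX ew] := bmax_attained (I0 _ XI).
have uE : u \in E by have := extE u; rewrite uX eu eqxx.
have wE : w \in E by have := extE w; rewrite wX ew eqxx orbT.
have EX : E \subset X.
  have /implyP/(_ EP)/existsP[Y /andP[YI EY]] := refPI E.
  by rewrite (block_eq tI XI YI uX (subsetP EY _ uE)).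
exists E => //; split => //.
  by rewrite eu; apply: bmin_least => // i /(subsetP EX)/bmin_le; rewrite eu.
by rewrite ew; apply: bmax_greatest => // i /(subsetP EX)/le_bmax; rewrite ew.
Qed.

Lemma interval_block_hull I X : is_interval_part I -> X \in I -> hull X = X.
Proof.
case/andP => pI /forallP convI XI; have [_ I0 _] := is_part_blocks pI.
have [u uX eu] := bmin_attained (I0 _ XI); have [w wX ew] := bmax_attained (I0 _ XI).
apply/eqP; rewrite eqEsubset sub_hull andbT; apply/subsetP => i.
rewrite in_hull eu ew => /andP[le_ui le_iw].
have [/val_inj->|neq_ui] := eqVneq (i : nat) u => //.
have [/val_inj->|neq_iw] := eqVneq (i : nat) w => //.
have /implyP/(_ XI)/forallP/(_ u)/forallP/(_ i)/forallP/(_ w)/implyP := convI X.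
apply; rewrite uX wX !andbT ltn_neqAle le_ui ltn_neqAle le_iw.
by rewrite eq_sym neq_ui neq_iw.
Qed.

Lemma irr_refines_interval_outer P I X : is_NC P -> is_interval_part I ->
  irr_refines P I -> X \in I -> exists2 E, E \in outer_blocks P & hull E = X.
Proof.
move=> /andP[pP _] intI refPI XI; have /andP[pI _] := intI.
have [tP P0 _] := is_part_blocks pP; have [tI _ _] := is_part_blocks pI.
have [E EP [EX minE maxE]] := irr_refines_extremal_block pP pI refPI XI.
exists E; last by rewrite /hull minE maxE -/(hull X) (interval_block_hull intI XI).
apply/outer_blocksP; split => // B BP; apply/negP => nEB.
have E0 := P0 _ EP; have B0 := P0 _ BP.
move: (nEB); rewrite (nestedE _ E0) => /and3P[BE le_min le_max].
have /andP[/forallP refPI' _] := refPI.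
have /implyP/(_ BP)/existsP[Y /andP[YI BY]] := refPI' B.
have [b bB eb] := bmin_attained B0; have [c cB ec] := bmax_attained B0.
have [u uE eu] := bmin_attained E0.
(* the interval Y containing B also contains min E, hence is X *)
have uY : u \in Y.
  rewrite -(interval_block_hull intI YI) in_hull -eu.
  rewrite (leq_trans (bmin_le (subsetP BY _ bB))) -?eb //=.
  apply: leq_trans (le_bmax (subsetP BY _ cB)); rewrite -ec.
  exact: leq_trans (bmin_le_bmax E0) le_max.
have XY := block_eq tI XI YI (subsetP EX _ uE) uY; subst Y.
have := bmin_le (subsetP BY _ bB); rewrite -minE eu => le_ub.
have ebu : b = u by apply/val_inj/eqP; rewrite /= eqn_leq le_ub andbT -eb -eu.
by subst b; move: BE; rewrite (block_eq tP BP EP bB uE) eqxx.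
Qed.

Lemma interval_closure_unique P I : is_NC P -> is_interval_part I ->
  irr_refines P I -> I = interval_closure P.
Proof.
move=> ncP intI refPI; have /andP[/forallP refPI' _] := refPI.
apply/setP => X; apply/idP/imsetP => [XI|[V VO ->]].
  by have [E EO <-] := irr_refines_interval_outer ncP intI refPI XI; exists E.
have /outer_blocksP[VP notV] := VO.
have /implyP/(_ VP)/existsP[Y /andP[YI VY]] := refPI' V.
have [E EO hE] := irr_refines_interval_outer ncP intI refPI YI.
have [<-|VE] := eqVneq E V; first by rewrite hE.
have EP : E \in P by case/outer_blocksP: EO.
by have := notV _ EP; rewrite sub_hull_nested // hE.
Qed.

Definition restrict_part P W := [set V in P | V \subset W].

Definition irr_NC (D : {set 'I_n}) (S : {set {set 'I_n}}) :=
  [&& partition S D, noncrossing S &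
      [exists V in S, forall i in D, ((val i == bmin D) || (val i == bmax D)) ==> (i \in V)]].

Lemma irr_NC_blocks (D : {set 'I_n}) S : irr_NC D S ->
  [/\ forall V, V \in S -> V \subset D, forall V, V \in S -> V != set0,
      trivIset S & noncrossing S].
Proof.
case/and3P => /and3P[/eqP coverS tS S0] ncS _; split => // V VS.
  by rewrite -coverS; apply: bigcup_sup.
by apply: contraNneq S0 => <-.
Qed.

Lemma restrict_irr_NC P I W : is_NC P -> is_part I ->
  irr_refines P I -> W \in I -> irr_NC W (restrict_part P W).
Proof.
move=> /andP[pP ncP] pI /andP[/forallP refPI /forallP extPI] WI.
have [tP P0 pblockP] := is_part_blocks pP; have [tI I0 _] := is_part_blocks pI.
have inW V x : V \in P -> x \in V -> x \in W -> V \subset W.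
  move=> VP xV xW; have /implyP/(_ VP)/existsP[Y /andP[YI VY]] := refPI V.
  by rewrite (block_eq tI WI YI xW (subsetP VY _ xV)).
have subP : restrict_part P W \subset P by apply/subsetP => V; rewrite inE => /andP[].
apply/and3P; split; last 1 first.
- have /implyP/(_ WI)/existsP[V /andP[VP extV]] := extPI W.
  apply/existsP; exists V; rewrite extV andbT inE VP /=.
  have [u uW eu] := bmin_attained (I0 _ WI).
  by apply: (inW _ u) => //; have := forallP extV u; rewrite uW eu eqxx.
- apply/and3P; split; last by rewrite inE; apply/negP => /andP[/P0]; rewrite eqxx.
  + apply/eqP/setP => x; apply/bigcupP/idP => [[V]|xW].
      by rewrite inE => /andP[_ /subsetP VW] /VW.
    case: (pblockP x) => xP xB; exists (pblock P x) => //.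
    by rewrite inE xP (inW _ x).
  + exact: trivIsetS tP.
- exact: noncrossingS ncP.
Qed.

Section ExtremalBlock.
Variables (P I : {set {set 'I_n}}) (W E : {set 'I_n}).
Hypotheses (ncP : is_NC P) (pI : is_part I) (refPI : irr_refines P I).
Hypotheses (WI : W \in I) (EP : E \in P) (EW : E \subset W).
Hypotheses (minE : bmin E = bmin W) (maxE : bmax E = bmax W).

Let pP : is_part P. Proof. by case/andP: ncP. Qed.
Let tP : trivIset P. Proof. by case: (is_part_blocks pP). Qed.
Let P0 V : V \in P -> V != set0. Proof. by case: (is_part_blocks pP) => _ + _; apply. Qed.
Let tI : trivIset I. Proof. by case: (is_part_blocks pI). Qed.

Lemma hull_extremal : hull E = hull W.
Proof. by rewrite /hull minE maxE. Qed.

Lemma nested_extremal V : V \in restrict_part P W -> V != E -> nested V E.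
Proof.
rewrite inE => /andP[_ VW] VE; apply: sub_hull_nested; last by rewrite eq_sym.
by rewrite hull_extremal (subset_trans VW (sub_hull W)).
Qed.

Lemma extremal_not_nested B : B \in P -> B \subset W -> ~~ nested E B.
Proof.
move=> BP BW; apply/negP; rewrite (nestedE _ (P0 EP)) => /and3P[BE le_min _].
have B0 := P0 BP; have [le_minB _] := subset_bmin_bmax B0 BW.
have [b bB eb] := bmin_attained B0; have [u uE eu] := bmin_attained (P0 EP).
have ebu : b = u by apply/val_inj/eqP; rewrite /= -eb -eu eqn_leq le_min minE.
by subst b; move: BE; rewrite (block_eq tP BP EP bB uE) eqxx.
Qed.

Lemma extremal_outer_restrict : E \in outer_blocks (restrict_part P W).
Proof.
apply/outer_blocksP; split; first by rewrite inE EP EW.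
by move=> B; rewrite inE => /andP[BP BW]; apply: extremal_not_nested.
Qed.

Lemma extremal_outer : (E \in outer_blocks P) = (W \in outer_blocks I).
Proof.
have /andP[/forallP refPI' _] := refPI.
apply/outer_blocksP/outer_blocksP => [[_ notE]|[_ notW]]; split => // X XI.
  apply/negP => nWX; have XW : X != W by case/andP: nWX.
  have [E' E'P [E'X minE' maxE']] := irr_refines_extremal_block pP pI refPI XI.
  have [u uE] := set0Pn _ (P0 EP).
  have E'E : E' != E.
    apply: contraNneq XW => eE; apply/eqP/(block_eq tI XI WI (x := u)).
      by rewrite (subsetP E'X) // eE.
    exact: subsetP EW _ uE.
  have := notE _ E'P; rewrite sub_hull_nested //.
  by rewrite /hull minE' maxE' -/(hull X) (subset_trans EW (nested_sub_hull nWX)).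
apply/negP => nEB.
have /implyP/(_ XI)/existsP[Y /andP[YI XY]] := refPI' X.
have [eYW|YW] := eqVneq Y W.
  by rewrite eYW in XY; move/negP: (extremal_not_nested XI XY).
have := notW _ YI; rewrite sub_hull_nested // ?(eq_sym Y) //.
have [le_minX le_maxX] := subset_bmin_bmax (P0 XI) XY.
move: nEB; rewrite (nestedE _ (P0 EP)) => /and3P[_ le_min le_max].
apply/subsetP => w wW; rewrite in_hull.
have := bmin_le wW; have := le_bmax wW; rewrite -minE -maxE => w_le_max min_le_w.
rewrite (leq_trans le_minX (leq_trans le_min min_le_w)).
by rewrite (leq_trans w_le_max (leq_trans le_max le_maxX)).
Qed.

End ExtremalBlock.

Lemma outer_blocks_restrict P I W V : is_NC P -> is_part I ->
  irr_refines P I -> W \in I -> V \in restrict_part P W ->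
  (V \in outer_blocks P) =
  (W \in outer_blocks I) && (V \in outer_blocks (restrict_part P W)).
Proof.
move=> ncP pI refPI WI VR; have /andP[pP _] := ncP.
have [E EP [EW minE maxE]] := irr_refines_extremal_block pP pI refPI WI.
have [->|VE] := eqVneq V E.
  by rewrite (extremal_outer ncP pI refPI WI EP EW minE maxE)
             (extremal_outer_restrict ncP EP EW minE) andbT.
have nVE := nested_extremal minE maxE VR VE.
have ER : E \in restrict_part P W by rewrite inE EP EW.
apply/idP/idP => [/outer_blocksP[_ notV]|/andP[_ /outer_blocksP[_ notV]]].
  by have := notV _ EP; rewrite nVE.
by have := notV _ ER; rewrite nVE.
Qed.

Lemma bigcup_restrict_part P I : refines P I ->
  \bigcup_(W in I) restrict_part P W = P.
Proof.
move=> /forallP refPI; apply/setP => V; apply/bigcupP/idP => [[W _]|VP].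
  by rewrite inE => /andP[].
have /implyP/(_ VP)/existsP[W /andP[WI VW]] := refPI V.
by exists W => //; rewrite inE VP.
Qed.

Section Glue.
Variables (I : {set {set 'I_n}}) (f : {set 'I_n} -> {set {set 'I_n}}).
Hypotheses (ncI : is_NC I) (irr_f : forall W, W \in I -> irr_NC W (f W)).

Let glued := \bigcup_(W in I) f W.

Let pI : is_part I. Proof. by case/andP: ncI. Qed.
Let tI : trivIset I. Proof. by case: (is_part_blocks pI). Qed.

Let f_sub W V : W \in I -> V \in f W -> V \subset W.
Proof. by move=> WI; case: (irr_NC_blocks (irr_f WI)) => sub _ _ _; apply: sub. Qed.

Let f_neq0 W V : W \in I -> V \in f W -> V != set0.
Proof. by move=> WI; case: (irr_NC_blocks (irr_f WI)) => _ neq0 _ _; apply: neq0. Qed.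

Let f_index W1 W2 V : W1 \in I -> W2 \in I -> V \in f W1 -> V \subset W2 -> W1 = W2.
Proof.
move=> W1I W2I VW1 VW2; have [x xV] := set0Pn _ (f_neq0 W1I VW1).
exact: block_eq tI W1I W2I (subsetP (f_sub W1I VW1) _ xV) (subsetP VW2 _ xV).
Qed.

Lemma restrict_glue W : W \in I -> restrict_part glued W = f W.
Proof.
move=> WI; apply/setP => V; rewrite inE.
apply/andP/idP => [[/bigcupP[W' W'I VW'] VW]|VW]; first by rewrite -(f_index W'I WI VW' VW).
by split; [apply/bigcupP; exists W | apply: f_sub VW].
Qed.

Lemma glue_is_part : is_part glued.
Proof.
have [_ _ pblockI] := is_part_blocks pI.
apply/and3P; split.
- apply/eqP/setP => x; rewrite inE; case: (pblockI x) => xI xB.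
  case/and3P: (irr_f xI) => /and3P[/eqP coverS _ _] _ _.
  move: xB; rewrite -{1}coverS => /bigcupP[V VS xV].
  by apply/bigcupP; exists V => //; apply/bigcupP; exists (pblock I x).
- apply/trivIsetP => V1 V2 /bigcupP[W1 W1I V1W] /bigcupP[W2 W2I V2W] V12.
  have [eW|W12] := eqVneq W1 W2.
    rewrite -eW in V2W; case: (irr_NC_blocks (irr_f W1I)) => _ _ /trivIsetP tS _.
    exact: tS.
  apply/pred0P => i /=; apply/negP => /andP[iV1 iV2]; move/eqP: W12; apply.
  exact: block_eq tI W1I W2I (subsetP (f_sub W1I V1W) _ iV1) (subsetP (f_sub W2I V2W) _ iV2).
- by apply/bigcupP => [][W WI /(f_neq0 WI)]; rewrite eqxx.
Qed.

Lemma glue_noncrossing : noncrossing glued.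
Proof.
have /andP[_ /noncrossingP ncI'] := ncI.
apply/noncrossingP => V1 V2 a b c d /bigcupP[W1 W1I V1W] /bigcupP[W2 W2I V2W] V12.
have [eW|W12] := eqVneq W1 W2.
  rewrite -eW in V2W; case: (irr_NC_blocks (irr_f W1I)) => _ _ _ /noncrossingP ncS.
  exact: ncS.
have s1 := subsetP (f_sub W1I V1W); have s2 := subsetP (f_sub W2I V2W).
move=> ab bc cd aV cV bV dV.
exact: ncI' W1I W2I W12 ab bc cd (s1 _ aV) (s1 _ cV) (s2 _ bV) (s2 _ dV).
Qed.

Lemma glue_irr_refines : irr_refines glued I.
Proof.
apply/andP; split.
  apply/forallP => V; apply/implyP => /bigcupP[W WI VW].
  by apply/existsP; exists W; rewrite WI (f_sub WI VW).
apply/forallP => W; apply/implyP => WI.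
case/and3P: (irr_f WI) => _ _ /existsP[V /andP[VW extV]].
by apply/existsP; exists V; rewrite extV andbT; apply/bigcupP; exists W.
Qed.

End Glue.

End Blocks.

Section Weights.
Local Open Scope ring_scope.
Variables (R : comPzRingType) (M : Type).
Implicit Types (rc rp : seq M -> R).

Definition nc_weight rc rp n (a : 'I_n -> M) (P : {set {set 'I_n}}) :=
  (\prod_(V in outer_blocks P) restr rc a V) * (\prod_(W in inner_blocks P) restr rp a W).

Definition irr_weight rc rp n (a : 'I_n -> M) (D : {set 'I_n}) :=
  \sum_(S | irr_NC D S) nc_weight rc rp a S.

Lemma nc_weightE rc rp n (a : 'I_n -> M) P :
  nc_weight rc rp a P =
  \prod_(V in P) (if V \in outer_blocks P then restr rc a V else restr rp a V).
Proof.
rewrite /nc_weight [RHS](bigID (mem (outer_blocks P))) /= inner_blocksE.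
symmetry; congr (_ * _).
  apply: eq_big => [V|V /andP[_ ->]] //.
  by apply/andP/idP => [[]//|VO]; split => //; case/outer_blocksP: VO.
by apply: eq_big => [V|V /andP[_ /negbTE ->]] //; rewrite in_setD andbC.
Qed.

Lemma nc_weight_factor rc rp n (a : 'I_n -> M) (P I : {set {set 'I_n}}) :
  is_NC P -> is_part I -> irr_refines P I ->
  nc_weight rc rp a P =
  \prod_(W in I) (if W \in outer_blocks I then nc_weight rc rp a (restrict_part P W)
                  else nc_weight rp rp a (restrict_part P W)).
Proof.
move=> ncP pI refPI; have /andP[pP _] := ncP; have [_ P0 _] := is_part_blocks pP.
have [tI _ _] := is_part_blocks pI; have /andP[/forallP refPI' _] := refPI.
set g := fun V => if V \in outer_blocks P then restr rc a V else restr rp a V.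
transitivity (\prod_(W in I) \prod_(V | (V \in P) && (V \subset W)) g V).
  rewrite nc_weightE (exchange_big_dep (mem P)) /=; last by move=> W V _ /andP[].
  apply: eq_bigr => V VP.
  have /implyP/(_ VP)/existsP[W0 /andP[W0I VW0]] := refPI' V.
  rewrite (big_pred1 W0) // => W /=; apply/andP/eqP => [[WI /andP[_ VW]]|->].
    have [x xV] := set0Pn _ (P0 _ VP).
    exact: block_eq tI WI W0I (subsetP VW _ xV) (subsetP VW0 _ xV).
  by rewrite W0I VP VW0.
apply: eq_bigr => W WI; case: ifP => WO; rewrite nc_weightE.
all: apply: eq_big => [V|V VPW]; first by rewrite inE.
all: have VR : V \in restrict_part P W by rewrite inE.
all: by rewrite /g (outer_blocks_restrict ncP pI refPI WI VR) WO //=; case: ifP.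
Qed.

Lemma sum_irr_refines rc rp n (a : 'I_n -> M) (I : {set {set 'I_n}}) : is_NC I ->
  \sum_(P : {set {set 'I_n}} | is_NC P && irr_refines P I) nc_weight rc rp a P =
  \prod_(W in I) (if W \in outer_blocks I then irr_weight rc rp a W
                  else irr_weight rp rp a W).
Proof.
move=> ncI; have /andP[pI _] := ncI.
pose w W S := if W \in outer_blocks I then nc_weight rc rp a S else nc_weight rp rp a S.
transitivity (\prod_(W in I) \sum_(S | irr_NC W S) w W S); last first.
  by apply: eq_bigr => W _; rewrite /w /irr_weight; case: ifP.
rewrite (big_distr_big_dep set0) /=.
(* [glue] and [pieces] are inverse bijections between the partitions
   irreducibly refining I and the families of irreducible partitions of its blocks *)
pose glue (f : {ffun {set 'I_n} -> {set {set 'I_n}}}) := \bigcup_(W in I) f W.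
pose pieces (P : {set {set 'I_n}}) :=
  [ffun W => if W \in I then restrict_part P W else set0].
rewrite (reindex_onto glue pieces); last first.
  move=> P /andP[ncP /andP[refPI _]]; rewrite /glue -{2}(bigcup_restrict_part refPI).
  by apply: eq_bigr => W WI; rewrite ffunE WI.
apply: eq_big => [f|f].
  apply/idP/familyP => [/andP[/andP[ncP refPI] /eqP <-] W|fam].
    rewrite /pieces ffunE /=; case: ifP => WI; last by rewrite inE.
    exact: restrict_irr_NC ncP pI refPI WI.
  have irr_f W : W \in I -> irr_NC W (f W) by move=> WI; have := fam W; rewrite /= WI.
  rewrite /is_NC /glue (glue_is_part ncI irr_f) (glue_noncrossing ncI irr_f).
  rewrite (glue_irr_refines irr_f) /=.
  apply/eqP/ffunP => W; rewrite ffunE.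
  case: ifP => WI; first exact: restrict_glue.
  by have := fam W; rewrite /= WI inE => /eqP.
case/andP=> /andP[ncP refPI] /eqP ef.
rewrite (nc_weight_factor _ _ _ ncP pI refPI); apply: eq_bigr => W WI.
suff -> : restrict_part (glue f) W = f W by [].
by rewrite -[in RHS]ef /pieces ffunE WI.
Qed.

End Weights.

Lemma sorted_enum_ord k (A : {set 'I_k}) : sorted (fun x y : 'I_k => x < y) (enum A).
Proof.
rewrite /enum_mem -enumT; apply: sorted_filter => [x y z|]; first exact: ltn_trans.
by have := iota_ltn_sorted 0 k; rewrite -val_enum_ord sorted_map.
Qed.

Section OrderEmbedding.
Variables (m n : nat) (h : 'I_m -> 'I_n).
Hypothesis h_mono : forall x y : 'I_m, (h x < h y) = (x < y).

Let h_leq (x y : 'I_m) : (h x <= h y) = (x <= y).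
Proof. by rewrite leqNgt h_mono -leqNgt. Qed.

Let h_inj : injective h.
Proof. by move=> x y e; apply/val_inj/eqP; rewrite eqn_leq -h_leq -(h_leq y) e leqnn. Qed.

Let himg_inj : injective (fun V : {set 'I_m} => h @: V).
Proof. exact: imset_inj h_inj. Qed.

Definition image_part (S : {set {set 'I_m}}) : {set {set 'I_n}} :=
  [set h @: (V : {set _}) | V in S].
Definition preimage_part (T : {set {set 'I_n}}) : {set {set 'I_m}} :=
  [set h @^-1: (V : {set _}) | V in T].

Let preimage_imsetK (V : {set 'I_m}) : h @^-1: (h @: V) = V.
Proof.
apply/setP => x; rewrite inE.
by apply/imsetP/idP => [[y yV /h_inj ->]//|xV]; exists x.
Qed.

Lemma image_partK : cancel image_part preimage_part.
Proof.
move=> S; rewrite /preimage_part /image_part -imset_comp -[RHS]imset_id.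
by apply: eq_imset => V /=; exact: preimage_imsetK.
Qed.

Lemma preimage_partK (T : {set {set 'I_n}}) :
  (forall V, V \in T -> V \subset h @: setT) -> image_part (preimage_part T) = T.
Proof.
move=> subT; rewrite /image_part /preimage_part -imset_comp -[RHS]imset_id.
apply: eq_in_imset => V VT /=; apply/setP => x; apply/imsetP/idP => [[y]|xV].
  by rewrite inE => yV ->.
by have /imsetP[y _ ex] := subsetP (subT V VT) x xV; exists y; rewrite // inE -ex.
Qed.

Lemma bmin_image (V : {set 'I_m}) (u : 'I_m) : u \in V -> bmin V = u -> bmin (h @: V) = h u.
Proof.
move=> uV eu; apply: bmin_least; first exact: imset_f.
by move=> _ /imsetP[v vV ->]; rewrite h_leq -eu bmin_le.
Qed.

Lemma bmax_image (V : {set 'I_m}) (u : 'I_m) : u \in V -> bmax V = u -> bmax (h @: V) = h u.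
Proof.
move=> uV eu; apply: bmax_greatest; first exact: imset_f.
by move=> _ /imsetP[v vV ->]; rewrite h_leq -eu le_bmax.
Qed.

Lemma nested_image (W V : {set 'I_m}) : W != set0 -> V != set0 ->
  nested (h @: W) (h @: V) = nested W V.
Proof.
move=> W0 V0; rewrite !nestedE ?imset_eq0 // (inj_eq himg_inj).
have [u uW eu] := bmin_attained W0; have [w wW ew] := bmax_attained W0.
have [u' uV eu'] := bmin_attained V0; have [w' wV ew'] := bmax_attained V0.
rewrite (bmin_image uW eu) (bmax_image wW ew) (bmin_image uV eu') (bmax_image wV ew').
by rewrite !h_leq eu ew eu' ew'.
Qed.

Lemma outer_blocks_image (S : {set {set 'I_m}}) : (forall V, V \in S -> V != set0) ->
  outer_blocks (image_part S) = image_part (outer_blocks S).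
Proof.
move=> S0; apply/setP => X.
apply/outer_blocksP/imsetP => [[/imsetP[V VS ->] notX]|[V VO ->]].
  exists V => //; apply/outer_blocksP; split => // U US.
  by have := notX _ (imset_f _ US); rewrite nested_image ?S0.
case/outer_blocksP: VO => VS notV; split; first exact: imset_f.
by move=> _ /imsetP[U US ->]; rewrite nested_image ?S0 ?notV.
Qed.

Lemma inner_blocks_image (S : {set {set 'I_m}}) : (forall V, V \in S -> V != set0) ->
  inner_blocks (image_part S) = image_part (inner_blocks S).
Proof.
move=> S0; rewrite !inner_blocksE outer_blocks_image //; apply/setP => X.
rewrite in_setD; apply/andP/imsetP => [[notO /imsetP[V VS eX]]|[V]].
  subst X; exists V => //; rewrite in_setD VS andbT.
  by apply: contra notO => VO; apply: imset_f.
rewrite in_setD => /andP[notO VS] ->; split; last exact: imset_f.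
by apply/imsetP => [][U UO /himg_inj eUV]; rewrite eUV UO in notO.
Qed.

Lemma noncrossing_image (S : {set {set 'I_m}}) : noncrossing (image_part S) = noncrossing S.
Proof.
apply/noncrossingP/noncrossingP => ncS.
  move=> U V a b c d US VS UV ab bc cd aU cU bV dV.
  apply: (ncS (h @: U) (h @: V) (h a) (h b) (h c) (h d)); rewrite ?imset_f ?h_mono //.
  by rewrite (inj_eq himg_inj).
move=> _ _ a b c d /imsetP[U US ->] /imsetP[V VS ->] UV ab bc cd.
move=> /imsetP[a' a'U ea] /imsetP[c' c'U ec] /imsetP[b' b'V eb] /imsetP[d' d'V ed].
subst a b c d; rewrite !h_mono in ab bc cd; apply: (ncS U V a' b' c' d') => //.
by apply: contraNneq UV => ->.
Qed.

Lemma restr_image (T R : Type) (L : seq T -> R) (a : 'I_n -> T) (V : {set 'I_m}) :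
  restr L a (h @: V) = restr L (a \o h) V.
Proof.
rewrite /restr (map_comp a h); congr (L (map a _)).
apply: (@irr_sorted_eq _ (fun x y : 'I_n => x < y)) => [x y z|x|||x].
- exact: ltn_trans.
- by rewrite ltnn.
- exact: sorted_enum_ord.
- by rewrite sorted_map; apply: sub_sorted (sorted_enum_ord V) => x y; rewrite /= h_mono.
rewrite mem_enum; apply/imsetP/mapP => [[y yV ->]|[y]]; first by exists y; rewrite ?mem_enum.
by rewrite mem_enum => yV ->; exists y.
Qed.

Let extremal_image (D : {set 'I_m}) (j : 'I_m) : D != set0 ->
  [/\ (val (h j) == bmin (h @: D)) = (val j == bmin D)
    & (val (h j) == bmax (h @: D)) = (val j == bmax D)].
Proof.
move=> D0; have [u uD eu] := bmin_attained D0; have [w wD ew] := bmax_attained D0.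
rewrite (bmin_image uD eu) (bmax_image wD ew) eu ew.
by split; apply/eqP/eqP => [/val_inj/h_inj ->|/val_inj ->].
Qed.

Lemma irr_NC_image (D : {set 'I_m}) S : D != set0 ->
  irr_NC (h @: D) (image_part S) = irr_NC D S.
Proof.
move=> D0; rewrite /irr_NC (imset_partition _ _ h_inj) noncrossing_image.
congr [&& _, _ & _]; apply/existsP/existsP.
  case=> _ /andP[/imsetP[V VS ->] /forallP extV]; exists V; rewrite VS /=.
  apply/forallP => j; apply/implyP => jD; have [minj maxj] := extremal_image j D0.
  have := extV (h j); rewrite imset_f //= minj maxj => /implyP extVj.
  by apply/implyP => /extVj/imsetP[k kV /h_inj ->].
case=> V /andP[VS /forallP extV]; exists (h @: V); rewrite imset_f //=.
apply/forallP => x; apply/implyP => /imsetP[j jD ->].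
rewrite (extremal_image j D0).1 (extremal_image j D0).2.
by have := extV j; rewrite jD /= => /implyP extVj; apply/implyP => /extVj jV; apply: imset_f.
Qed.

Lemma nc_weight_image (R : comPzRingType) (T : Type) (rc rp : seq T -> R)
    (a : 'I_n -> T) (S : {set {set 'I_m}}) :
  (forall V, V \in S -> V != set0) ->
  nc_weight rc rp a (image_part S) = nc_weight rc rp (a \o h) S.
Proof.
move=> S0; rewrite /nc_weight outer_blocks_image // inner_blocks_image //.
have himg_injA (A : {set {set 'I_m}}) : {in A &, injective (fun V : {set 'I_m} => h @: V)}.
  by move=> U V _ _; apply: himg_inj.
rewrite /image_part !big_imset //; congr (_ * _)%R; apply: eq_bigr => V _; exact: restr_image.
Qed.

Lemma irr_weight_image (R : comPzRingType) (T : Type) (rc rp : seq T -> R) (a : 'I_n -> T) :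
  0 < m -> irr_weight rc rp a (h @: setT) = irr_weight rc rp (a \o h) setT.
Proof.
move=> m_gt0; have T0 : [set: 'I_m] != set0 by apply/set0Pn; exists (Ordinal m_gt0).
rewrite /irr_weight (reindex_onto image_part preimage_part); last first.
  move=> S /irr_NC_blocks[subS _ _ _]; exact: preimage_partK.
apply: eq_big => [S|S /andP[irrS _]].
  by rewrite image_partK eqxx andbT irr_NC_image.
rewrite irr_NC_image // in irrS; apply: nc_weight_image => V VS.
by case: (irr_NC_blocks irrS) => _ neq0 _ _; apply: neq0.
Qed.

End OrderEmbedding.

Lemma interval_part_NC n (I : {set {set 'I_n}}) : is_interval_part I -> is_NC I.
Proof.
case/andP => pI /forallP convI; have [tI _ _] := is_part_blocks pI.
rewrite /is_NC pI; apply/noncrossingP => U V a b c d UI VI UV ab bc cd aU cU bV dV.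
have /implyP/(_ UI)/forallP/(_ a)/forallP/(_ b)/forallP/(_ c)/implyP := convI U.
rewrite ab bc aU cU => /(_ isT) bU.
by move/eqP: UV; apply; apply: block_eq tI UI VI bU bV.
Qed.

Lemma outer_blocks_interval n (I : {set {set 'I_n}}) :
  is_interval_part I -> outer_blocks I = I.
Proof.
move=> intI; have /andP[pI _] := intI; have [tI I0 _] := is_part_blocks pI.
apply/setP => V; apply/outer_blocksP/idP => [[]//|VI]; split => // W WI.
apply/negP => nVW; have VW := nested_sub_hull nVW.
rewrite (interval_block_hull intI WI) in VW.
have [x xV] := set0Pn _ (I0 _ VI).
by move: nVW => /andP[/eqP[]]; apply: block_eq tI WI VI (subsetP VW _ xV) xV.
Qed.

Lemma interval_part_single m : 0 < m -> is_interval_part [set [set: 'I_m]].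
Proof.
move=> m_gt0; apply/andP; split.
  apply/and3P; split; [by rewrite cover1 | exact: trivIset1 |].
  by rewrite inE eq_sym; apply/set0Pn; exists (Ordinal m_gt0).
apply/forallP => V; apply/implyP; rewrite inE => /eqP->.
by apply/forallP => i; apply/forallP => j; apply/forallP => k; rewrite !in_setT implybT.
Qed.

Lemma interval_part_card_block m (I : {set {set 'I_m}}) V :
  is_interval_part I -> I != [set [set: 'I_m]] -> V \in I -> #|V| < m.
Proof.
move=> /andP[pI _] IT VI; have [tI I0 _] := is_part_blocks pI.
have VT : V != setT.
  apply: contraNneq IT => eVT; apply/eqP/setP => U; rewrite inE.
  apply/idP/eqP => [UI|->]; last by rewrite -eVT.
  have [x xU] := set0Pn _ (I0 _ UI).
  by rewrite (block_eq tI UI VI xU) // eVT inE.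
by have := @proper_card _ V setT; rewrite properT VT cardsT card_ord; apply.
Qed.

Lemma sum_NC_by_interval_closure n (R : nmodType) (F : {set {set 'I_n}} -> R) :
  (\sum_(P | is_NC P) F P =
   \sum_(I | is_interval_part I) \sum_(P | is_NC P && irr_refines P I) F P)%R.
Proof.
symmetry; rewrite (exchange_big_dep (fun P => is_NC P)) /=; last by move=> I P _ /andP[].
apply: eq_bigr => P ncP; rewrite (big_pred1 (interval_closure P)) // => I /=.
apply/idP/eqP => [/andP[intI /andP[_ refPI]]|->]; first exact: interval_closure_unique.
by rewrite ncP interval_closure_interval ?irr_refines_closure.
Qed.

Lemma enum_val_mono n (W : {set 'I_n}) (x y : 'I_#|W|) :
  (enum_val x < enum_val y) = (x < y).
Proof.
have w0 := enum_val x; rewrite !(enum_val_nth w0).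
have lt_nth := sorted_ltn_nth (leT := fun x y : 'I_n => x < y) ltn_trans w0 (sorted_enum_ord W).
have sz (z : 'I_#|W|) : (z : nat) \in [pred k | k < size (enum W)] by rewrite inE -cardE.
case: (ltngtP x y) => [xy|yx|/val_inj->]; last by rewrite ltnn.
- exact: lt_nth (sz x) (sz y) xy.
- by apply/negbTE; rewrite -leqNgt ltnW // (lt_nth _ _ (sz y) (sz x) yx).
Qed.

Lemma imset_enum_val n (W : {set 'I_n}) : (@enum_val _ (mem W)) @: setT = W.
Proof.
apply/setP => x; apply/imsetP/idP => [[i _ ->]|xW]; first exact: enum_valP.
by exists (enum_rank_in xW x) => //; rewrite enum_rankK_in.
Qed.

Section BooleanCumulants.
Local Open Scope ring_scope.
Variables (R : comPzRingType) (M : Type) (beta rc rp : seq M -> R).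
Hypothesis moment_cumulant : forall m (b : 'I_m -> M),
  \sum_(I : {set {set 'I_m}} | is_interval_part I) \prod_(V in I) restr beta b V =
  \sum_(P : {set {set 'I_m}} | is_NC P) nc_weight rc rp b P.

Lemma restr_enum n (a : 'I_n -> M) (W : {set 'I_n}) (L : seq M -> R) :
  restr L a W = restr L (a \o @enum_val _ (mem W)) setT.
Proof. by rewrite -(restr_image (@enum_val_mono n W)) imset_enum_val. Qed.

Lemma irr_weight_enum n (a : 'I_n -> M) (W : {set 'I_n}) (rc' rp' : seq M -> R) :
  W != set0 -> irr_weight rc' rp' a W = irr_weight rc' rp' (a \o @enum_val _ (mem W)) setT.
Proof.
move=> W0; rewrite -(irr_weight_image (@enum_val_mono n W)) ?imset_enum_val //.
by rewrite card_gt0.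
Qed.

Lemma interval_moment_cumulant m (b : 'I_m -> M) :
  \sum_(I : {set {set 'I_m}} | is_interval_part I) \prod_(V in I) restr beta b V =
  \sum_(I : {set {set 'I_m}} | is_interval_part I) \prod_(V in I) irr_weight rc rp b V.
Proof.
rewrite moment_cumulant sum_NC_by_interval_closure; apply: eq_bigr => I intI.
rewrite (sum_irr_refines _ _ _ (interval_part_NC intI)) outer_blocks_interval //.
by apply: eq_bigr => W ->.
Qed.

(* All interval partitions but the one-block one have strictly shorter blocks,
   so by induction their terms agree in [interval_moment_cumulant]; hence so do
   the one-block terms. *)
Lemma boolean_cumulant_full m : (0 < m)%N ->
  forall b : 'I_m -> M, restr beta b setT = irr_weight rc rp b setT.
Proof.
elim/ltn_ind: m => m IH m_gt0 b; set T := [set [set: 'I_m]].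
have intT := interval_part_single m_gt0.
have mc := interval_moment_cumulant b.
rewrite (bigD1 T intT) [X in _ = X](bigD1 T intT) /= !big_set1 in mc.
suff shorter : \sum_(I | is_interval_part I && (I != T)) \prod_(V in I) restr beta b V =
    \sum_(I | is_interval_part I && (I != T)) \prod_(V in I) irr_weight rc rp b V.
  by rewrite shorter in mc; apply: addIr mc.
apply: eq_bigr => I /andP[intI IT]; apply: eq_bigr => V VI.
have /andP[pI _] := intI; have [_ I0 _] := is_part_blocks pI.
have V0 := I0 _ VI; rewrite restr_enum irr_weight_enum //.
by apply: IH; rewrite ?card_gt0 ?(interval_part_card_block intI IT VI).
Qed.

Lemma boolean_cumulant_irr n (a : 'I_n -> M) (W : {set 'I_n}) :
  W != set0 -> restr beta a W = irr_weight rc rp a W.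
Proof.
by move=> W0; rewrite restr_enum irr_weight_enum // boolean_cumulant_full ?card_gt0.
Qed.

End BooleanCumulants.

Local Open Scope ring_scope.

Theorem proposition3p5 (C : numClosedFieldType) (M : algType C)
    (star : M -> M) (phi psi : M -> C)
    (bphi bpsi rpsi rc : seq M -> C) :
  is_star_involution star ->
  is_state star phi -> is_state star psi -> is_tracial psi ->
  is_boolean_cumulants phi bphi ->
  is_boolean_cumulants psi bpsi ->
  is_free_cumulants psi rpsi ->
  is_cfree_cumulants phi rpsi rc ->
  forall (n : nat) (pi : {set {set 'I_n}}), is_NC pi ->
  forall a : 'I_n -> M,
    beta2 bphi bpsi pi a =
    \sum_(rho : {set {set 'I_n}} | is_NC rho && irr_refines rho pi)
      (\prod_(V in outer_blocks rho) restr rc a V) *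
      (\prod_(W in inner_blocks rho) restr rpsi a W).
Proof.
move=> _ _ _ _ bphiE bpsiE rpsiE rcE n pi ncpi a.
have phi_mc m (b : 'I_m -> M) :
    \sum_(I | is_interval_part I) \prod_(V in I) restr bphi b V =
    \sum_(P | is_NC P) nc_weight rc rpsi b P.
  by rewrite -bphiE rcE.
have psi_mc m (b : 'I_m -> M) :
    \sum_(I | is_interval_part I) \prod_(V in I) restr bpsi b V =
    \sum_(P | is_NC P) nc_weight rpsi rpsi b P.
  rewrite -bpsiE rpsiE; apply: eq_bigr => P _; rewrite nc_weightE.
  by apply: eq_bigr => V _; case: ifP.
have /andP[ppi _] := ncpi; have [_ pi0 _] := is_part_blocks ppi.
rewrite -[RHS]/(\sum_(rho | _) nc_weight rc rpsi a rho) sum_irr_refines //.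
rewrite -[LHS]/(nc_weight bphi bpsi a pi) nc_weightE; apply: eq_bigr => W Wpi.
by case: ifP => _; [apply: (boolean_cumulant_irr phi_mc) | apply: (boolean_cumulant_irr psi_mc)];
   apply: pi0.
Qed.
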